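(* Let $b>a\ge0$, let $w$ be a palindrome and let $x\in\mathbb{R}$ satisfy $x\ge\phi_w(0)$. Let $m=|10w|$, $v(x)=(x,1)^T$ and for $n\in\mathbb{Z}_+$, $k=1,\dots,m$ define $$x_{nm+k}(x)=\big[M\big((10w)^n(10w)_{1:k}\big)v(x)\big]_2,\qquad y_{nm+k}(x)=\big[M\big((01w)^n(01w)_{1:k}\big)v(x)\big]_2,$$ $\sigma_x^{(n)}=(x_{nm+1}(x),\dots,x_{nm+m}(x))$ and $\sigma_y^{(n)}=(y_{nm+1}(x),\dots,y_{nm+m}(x))$. Then for every $n\in\mathbb{Z}_+$, $\sigma_x^{(n)}$ and $\sigma_y^{(n)}$ are non-decreasing sequences of non-negative reals and $\sigma_x^{(n)}\prec^w\sigma_y^{(n)}$; i.e. $\sum_{k=1}^{j}x_{nm+k}(x)\ge\sum_{k=1}^{j}y_{nm+k}(x)$ for all $j=1,\dots,m$.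
   Context: Words are finite strings over $\{0,1\}$, $\epsilon$ the empty word, $w_k$ the $k$-th letter, $w_{1:k}=w_1\cdots w_k$, $|w|$ the length, $w^n$ the $n$-fold repetition, $\mathbb{Z}_+=\{0,1,2,\dots\}$; a palindrome is a word equal to its reverse. Define $F=\begin{pmatrix}1&1\\ a&1+a\end{pmatrix}$, $G=\begin{pmatrix}1&1\\ b&1+b\end{pmatrix}$, and for a word $w$, $M(w):=M(w_{|w|})\cdots M(w_1)$ with $M(\epsilon)=I$, $M(0)=F$, $M(1)=G$. $[u]_2$ is the second component of a vector $u$. With $\phi_0(x)=\frac{x+1}{ax+a+1}$, $\phi_1(x)=\frac{x+1}{bx+b+1}$ and $\phi_w=\phi_{w_{|w|}}\circ\cdots\circ\phi_{w_1}$, one has $\phi_w(0)=[M(w)]_{12}/[M(w)]_{22}$. For $x,y\in\mathbb{R}^m$ with entries sorted ascending as $x_{(1)}\le\dots\le x_{(m)}$, weak supermajorisation $x\prec^w y$ means $\sum_{k=1}^j x_{(k)}\ge\sum_{k=1}^j y_{(k)}$ for all $j=1,\dots,m$. *)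

From HB Require Import structures.
From mathcomp Require Import all_boot all_order all_algebra.
Set Implicit Arguments. Unset Strict Implicit. Unset Printing Implicit Defensive.
Import Order.TTheory GRing.Theory Num.Theory.
Local Open Scope ring_scope.

(* Words over {0,1} are bit sequences: letter 0 = false, letter 1 = true. *)
Definition word := seq bool.

Definition palindrome (w : word) : Prop := rev w = w.

Definition Mc {R : nzRingType} (c : R) : 'M[R]_2 :=
  \matrix_(i < 2, j < 2)
    (if (i == 0 :> nat) then 1 else if (j == 0 :> nat) then c else 1 + c).

Definition Mletter {R : nzRingType} (a b : R) (l : bool) : 'M[R]_2 :=
  if l then Mc b else Mc a.

(* M(w) = M(w_|w|) ... M(w_1), M(eps) = I *)
Definition Mword {R : nzRingType} (a b : R) (w : word) : 'M[R]_2 :=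
  foldl (fun A l => Mletter a b l *m A) 1%:M w.

Definition vec {R : nzRingType} (x : R) : 'cV[R]_2 :=
  \col_(i < 2) (if (i == 0 :> nat) then x else 1).

Definition snd2 {R : nzRingType} (u : 'cV[R]_2) : R := u ord_max ord0.

Definition phic {R : fieldType} (c : R) (x : R) : R := (x + 1) / (c * x + c + 1).
Definition philetter {R : fieldType} (a b : R) (l : bool) : R -> R :=
  if l then phic b else phic a.
Definition phiw {R : fieldType} (a b : R) (w : word) (x : R) : R :=
  foldl (fun y l => philetter a b l y) x w.

Definition wsupmaj {R : realFieldType} (x y : seq R) : Prop :=
  size x = size y /\
  forall j : nat, (1 <= j <= size x)%N ->
    \sum_(i < j) (sort <=%R y)`_i <= \sum_(i < j) (sort <=%R x)`_i.

Definition sigma {R : nzRingType} (a b : R) (u : word) (n : nat) (x : R) : seq R :=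
  [seq snd2 (Mword a b (flatten (nseq n u) ++ take k u) *m vec x)
  | k <- iota 1 (size u)].

From HB Require Import structures.
From mathcomp Require Import all_boot all_order all_algebra.
From mathcomp Require Import ring lra.
Set Implicit Arguments. Unset Strict Implicit. Unset Printing Implicit Defensive.
Import Order.TTheory GRing.Theory Num.Theory.
Local Open Scope ring_scope.

(* Write A = M(10w), B = M(01w) and v = v(x).  The k-th entry of sigma_x^(n) is
   the second coordinate of M((10w)_{1:k}) A^n v; as the coordinate sum of
   [Mc c *m y] exceeds that of [y] by the second coordinate of [Mc c *m y], the
   partial sums telescope to r_j A^n v with the row r_j = 1^T (M((10w)_{1:j}) - I),
   and likewise for sigma_y^(n) with s_j and B.  Both A and B have determinant 1,
   and as w is a palindrome they have the same trace t >= 2; by Cayley-Hamilton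
   the gap f_n = r_j A^n v - s_j B^n v satisfies f_{n+2} = t f_{n+1} - f_n, so it
   stays nonnegative once 0 <= f_0 <= f_1.  These base cases are explicit
   computations (f_1 = t f_0 minus the gap for adj A = A^-1 and adj B), in which
   x >= phi_w(0) = M(w)_12 / M(w)_22 enters.  Monotonicity and nonnegativity of
   each block follow from the nonnegativity of the entries of every M(u). *)

Section Matrix2.
Variable R : comNzRingType.
Implicit Types (A B : 'M[R]_2) (r : 'rV[R]_2) (y : 'cV[R]_2).

Lemma ord2_ind (P : 'I_2 -> Prop) : P 0 -> P 1 -> forall i, P i.
Proof.
move=> P0 P1 [[|[|//]] hi]; [congr P: P0 | congr P: P1]; exact: val_inj.
Qed.

Lemma sum_ord2 (F : 'I_2 -> R) : \sum_(i < 2) F i = F 0 + F 1.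
Proof. by rewrite big_ord_recl big_ord1; congr (_ + F _); apply: val_inj. Qed.

Lemma mulmx2E m n (A : 'M[R]_(m, 2)) (B : 'M[R]_(2, n)) i j :
  (A *m B) i j = A i 0 * B 0 j + A i 1 * B 1 j.
Proof. by rewrite !mxE sum_ord2. Qed.

Lemma mxtrace2 A : \tr A = A 0 0 + A 1 1.
Proof. exact: sum_ord2. Qed.

Lemma adj_mx2 A : \adj A = (\tr A)%:M - A.
Proof.
have lift00 : lift 0 0 = 1 :> 'I_2 by apply: val_inj.
have lift10 : lift 1 0 = 0 :> 'I_2 by apply: val_inj.
apply/matrixP; rewrite mxtrace2; elim/ord2_ind; elim/ord2_ind;
  by rewrite !mxE /cofactor det_mx11 !mxE ?lift00 ?lift10 ?modn_small //=; ring.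
Qed.

Lemma det_mx2 A : \det A = A 0 0 * A 1 1 - A 0 1 * A 1 0.
Proof.
have := congr1 (fun B : 'M[R]_2 => B 0 0) (mul_mx_adj A).
by rewrite adj_mx2 mxtrace2 !(mulmx2E, mxE) !mulrb /= => <-; ring.
Qed.

Lemma mx2P A B :
  A 0 0 = B 0 0 -> A 0 1 = B 0 1 -> A 1 0 = B 1 0 -> A 1 1 = B 1 1 -> A = B.
Proof.
move=> e00 e01 e10 e11; apply/matrixP.
by elim/ord2_ind => //; elim/ord2_ind.
Qed.

Lemma mulmx_trace_adj r A y :
  (r *m (A *m y)) 0 0 = \tr A * (r *m y) 0 0 - (r *m \adj A *m y) 0 0.
Proof.
by rewrite adj_mx2 mulmxBr mul_mx_scalar mulmxBl -scalemxAl mulmxA !mxE subKr.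
Qed.

Lemma det1_mx2_recurrence r A y : \det A = 1 ->
  (r *m (A *m (A *m y))) 0 0 = \tr A * (r *m (A *m y)) 0 0 - (r *m y) 0 0.
Proof.
move=> detA; rewrite mulmx_trace_adj -[r *m \adj A *m _]mulmxA.
by rewrite [\adj A *m (A *m y)]mulmxA mul_adj_mx detA mul1mx.
Qed.

Lemma snd2E y : snd2 y = y 1 0.
Proof. by congr (y _ _); apply: val_inj. Qed.

End Matrix2.

Section Recurrence.
Variable R : realFieldType.

Lemma recurrence_ge0 (f : nat -> R) t : 2 <= t ->
  (forall n, f n.+2 = t * f n.+1 - f n) -> 0 <= f 0 <= f 1 ->
  forall n, 0 <= f n <= f n.+1.
Proof.
move=> t2 rec base; elim=> // n /andP[f0 f1].
have f1_ge0 : 0 <= f n.+1 by apply: le_trans f1.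
rewrite f1_ge0 rec -subr_ge0.
have -> : t * f n.+1 - f n - f n.+1 = (t - 2) * f n.+1 + (f n.+1 - f n) by ring.
by rewrite addr_ge0 ?mulr_ge0 ?subr_ge0.
Qed.

Lemma orbit_gap_ge0 (r s : 'rV[R]_2) (A B : 'M[R]_2) (v : 'cV[R]_2) :
  \det A = 1 -> \det B = 1 -> \tr A = \tr B -> 2 <= \tr A ->
  0 <= (r *m v) 0 0 - (s *m v) 0 0 <= (r *m (A *m v)) 0 0 - (s *m (B *m v)) 0 0 ->
  forall n, 0 <= (r *m (A ^+ n *m v)) 0 0 - (s *m (B ^+ n *m v)) 0 0.
Proof.
move=> detA detB trAB tr2 base n.
pose f n := (r *m (A ^+ n *m v)) 0 0 - (s *m (B ^+ n *m v)) 0 0.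
suff /andP[] : 0 <= f n <= f n.+1 by [].
apply: (recurrence_ge0 tr2) n => [n|]; last by rewrite /f expr0 expr1 !mul1mx.
rewrite /f !exprS -!mulmxE -!mulmxA.
by rewrite !det1_mx2_recurrence // -trAB; ring.
Qed.

End Recurrence.

Section Words.
Variables (R : comNzRingType) (a b : R).
Local Notation M := (Mword a b).
Local Notation L := (Mletter a b).

Lemma MletterE l : L l = Mc (if l then b else a).
Proof. by case: l. Qed.

Lemma Mword_foldl (s : word) (B : 'M[R]_2) :
  foldl (fun A l => L l *m A) B s = M s *m B.
Proof.
elim: s B => [|l s IH] B /=; first by rewrite mul1mx.
by rewrite [in RHS]/Mword /= !IH mulmx1 mulmxA.
Qed.

Lemma Mword_cons l s : M (l :: s) = M s *m L l.
Proof. by rewrite {1}/Mword /= Mword_foldl mulmx1. Qed.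

Lemma Mword1 l : M [:: l] = L l.
Proof. by rewrite Mword_cons mul1mx. Qed.

Lemma Mword_cat s t : M (s ++ t) = M t *m M s.
Proof. by rewrite {1}/Mword foldl_cat Mword_foldl. Qed.

Lemma Mword_rcons s l : M (rcons s l) = L l *m M s.
Proof. by rewrite -cats1 Mword_cat Mword_cons mul1mx. Qed.

Lemma Mword_nseq (u : word) n : M (flatten (nseq n u)) = M u ^+ n.
Proof.
elim: n => [|n IH] /=; first by rewrite expr0.
by rewrite Mword_cat IH exprSr mulmxE.
Qed.

Lemma Mword_cons2 l1 l2 s : M (l1 :: l2 :: s) = M s *m (L l2 *m L l1).
Proof. by rewrite !Mword_cons mulmxA. Qed.

Lemma det_Mc (c : R) : \det (Mc c) = 1.
Proof. by rewrite det_mx2 !mxE /=; ring. Qed.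

Lemma det_Mword s : \det (M s) = 1.
Proof.
elim: s => [|l s IH]; first exact: det1.
by rewrite Mword_cons det_mulmx IH mul1r; case: l; apply: det_Mc.
Qed.

(* Transposition reverses products, and [Jrev] conjugates every [Mc c] into
   its transpose; hence [M (rev s)] is conjugate to [(M s)^T]. *)
Definition Jrev : 'M[R]_2 :=
  \matrix_(i < 2, j < 2)
    (if (i == 0 :> nat) then (if (j == 0 :> nat) then -1 else 1)
     else (if (j == 0 :> nat) then 1 else 0)).

Lemma Mc_Jrev (c : R) : Mc c *m Jrev = Jrev *m (Mc c)^T.
Proof. by apply/mx2P; rewrite !(mulmx2E, mxE) /=; ring. Qed.

Lemma Mword_rev s : M (rev s) *m Jrev = Jrev *m (M s)^T.
Proof.
elim: s => [|l s IH]; first by rewrite mul1mx trmx1 mulmx1.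
rewrite rev_cons Mword_rcons Mword_cons trmx_mul -mulmxA IH mulmxA.
by rewrite [RHS]mulmxA; congr (_ *m _); case: l; apply: Mc_Jrev.
Qed.

Lemma palindrome_Mword s : palindrome s -> M s 1 1 = M s 0 0 + M s 1 0.
Proof.
move=> pal_s; have := congr1 (fun A : 'M[R]_2 => A 1 0) (Mword_rev s).
rewrite pal_s /= !(mulmx2E, mxE) /= mulrN1 mulr1 mul1r mul0r addr0 => <-.
by ring.
Qed.

Lemma mxtrace_Mword_swap s : palindrome s ->
  \tr (M (true :: false :: s)) = \tr (M (false :: true :: s)).
Proof.
move=> pal_s; rewrite !Mword_cons2 !MletterE !mxtrace2 !(mulmx2E, mxE) /=.
by rewrite (palindrome_Mword pal_s); ring.
Qed.

Definition gain (X : 'M[R]_2) : 'rV[R]_2 := const_mx 1 *m (X - 1%:M).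

Lemma gain_Mc (c : R) X (y : 'cV[R]_2) :
  (gain (Mc c *m X) *m y) 0 0 = (gain X *m y) 0 0 + (Mc c *m (X *m y)) 1 0.
Proof. by rewrite /gain !(mulmx2E, mxE) /=; ring. Qed.

Lemma sigma_nth (u : word) n x i : (i < size u)%N ->
  (sigma a b u n x)`_i = (M (take i.+1 u) *m (M u ^+ n *m vec x)) 1 0.
Proof.
move=> lt_i_u; rewrite /sigma (nth_map 0%N) ?size_iota // nth_iota // add1n.
by rewrite snd2E Mword_cat Mword_nseq mulmxA.
Qed.

Lemma sum_sigma (u : word) n x j : (j <= size u)%N ->
  \sum_(i < j) (sigma a b u n x)`_i = (gain (M (take j u)) *m (M u ^+ n *m vec x)) 0 0.
Proof.
elim: j => [|j IH] le_j_u.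
  by rewrite big_ord0 take0 /gain subrr mulmx0 mul0mx mxE.
rewrite big_ord_recr IH ?(ltnW le_j_u) // sigma_nth // (take_nth false le_j_u).
by rewrite Mword_rcons MletterE gain_Mc -mulmxA.
Qed.

Lemma gain_gap_letter x :
  (gain (Mc b) *m vec x) 0 0 - (gain (Mc a) *m vec x) 0 0 = (b - a) * (x + 1).
Proof. by rewrite /gain !(mulmx2E, mxE) /=; ring. Qed.

Lemma gain_gap_block (K : 'M[R]_2) x :
  (gain (K *m (Mc a *m Mc b)) *m vec x) 0 0
    - (gain (K *m (Mc b *m Mc a)) *m vec x) 0 0
  = (b - a) * ((x + 1) * (K 0 0 + K 1 0) - (K 0 1 + K 1 1)).
Proof. by rewrite /gain !(mulmx2E, mxE) /=; ring. Qed.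

Lemma adj_gain_gap_letter (W : 'M[R]_2) x :
  (gain (Mc b) *m \adj (W *m (Mc a *m Mc b)) *m vec x) 0 0
    - (gain (Mc a) *m \adj (W *m (Mc b *m Mc a)) *m vec x) 0 0
  = (b - a) * (W 1 1 * x - W 0 1).
Proof. by rewrite !adj_mx2 !mxtrace2 /gain !(mulmx2E, mxE) /=; ring. Qed.

Lemma adj_gain_gap_block (W K : 'M[R]_2) x :
  (gain (K *m (Mc a *m Mc b)) *m \adj (W *m (Mc a *m Mc b)) *m vec x) 0 0
    - (gain (K *m (Mc b *m Mc a)) *m \adj (W *m (Mc b *m Mc a)) *m vec x) 0 0
  = (b - a) * (W 1 1 * x - W 0 1).
Proof. by rewrite !adj_mx2 !mxtrace2 /gain !(mulmx2E, mxE) /=; ring. Qed.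

End Words.

Section Positivity.
Variables (R : realFieldType) (a b : R).
Hypotheses (a_ge0 : 0 <= a) (b_ge0 : 0 <= b).
Local Notation M := (Mword a b).
Local Notation nonneg := (mxOver (Num.nneg : {pred R})).

Lemma letter_ge0 l : 0 <= (if l then b else a).
Proof. by case: l. Qed.

Lemma Mc_ge0 (c : R) : 0 <= c -> Mc c \is a nonneg.
Proof.
move=> c_ge0; apply/mxOverP; elim/ord2_ind; elim/ord2_ind;
  by rewrite mxE /= nnegrE ?addr_ge0.
Qed.

Lemma Mword_ge0 s : M s \is a nonneg.
Proof.
elim: s => [|l s IH]; first by apply: mxOver_scalar; rewrite nnegrE ?ler01.
by rewrite Mword_cons MletterE mxOverM ?Mc_ge0 ?letter_ge0.
Qed.

Lemma Mword_entry_ge0 s i j : 0 <= M s i j.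
Proof. by have /mxOverP := Mword_ge0 s; apply. Qed.

Lemma Mword_cons_diag_ge l s :
  M s 0 0 <= M (l :: s) 0 0 /\ M s 1 1 <= M (l :: s) 1 1.
Proof.
have := letter_ge0 l; have := Mword_entry_ge0 s.
rewrite Mword_cons MletterE !(mulmx2E, mxE) /=.
set c := if l then b else a => M_ge0 c_ge0.
have := mulr_ge0 (M_ge0 0 1) c_ge0; have := mulr_ge0 (M_ge0 1 1) c_ge0.
have := M_ge0 1 0; split; lra.
Qed.

Lemma Mword_diag_ge1 s : 1 <= M s 0 0 /\ 1 <= M s 1 1.
Proof.
elim: s => [|l s [IH0 IH1]]; first by rewrite !mxE.
have [le0 le1] := Mword_cons_diag_ge l s.
by split; [apply: le_trans le0 | apply: le_trans le1].
Qed.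

Lemma Mword_colsum_le s : M s 0 0 + M s 1 0 <= M s 0 1 + M s 1 1.
Proof.
case: s => [|l s]; first by rewrite !mxE /= addr0 add0r.
have := Mword_entry_ge0 s.
rewrite Mword_cons MletterE !(mulmx2E, mxE) /= => M_ge0.
have := M_ge0 0 1; have := M_ge0 1 1; lra.
Qed.

Lemma mxtrace_Mword_cons_ge l s : M s 1 1 + 1 <= \tr (M (l :: s)).
Proof.
have [M00_ge1 _] := Mword_diag_ge1 (l :: s); have [_ le11] := Mword_cons_diag_ge l s.
by rewrite mxtrace2; lra.
Qed.

Lemma vec_ge0 x : 0 <= x -> vec x \is a nonneg.
Proof. by move=> x_ge0; apply/mxOverP => i j; rewrite mxE nnegrE; case: ifP. Qed.

Lemma orbit_ge0 (u : word) n x : 0 <= x -> M u ^+ n *m vec x \is a nonneg.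
Proof.
by move=> x_ge0; rewrite -Mword_nseq mxOverM ?Mword_ge0 ?vec_ge0.
Qed.

Lemma sigma_sorted_ge0 (u : word) n x : 0 <= x ->
  sorted <=%R (sigma a b u n x) /\ all (fun t => 0 <= t) (sigma a b u n x).
Proof.
move=> x_ge0; have z_ge0 := orbit_ge0 u n x_ge0.
have prefix_ge0 k : M (take k u) *m (M u ^+ n *m vec x) \is a nonneg.
  by rewrite mxOverM ?Mword_ge0.
split.
  apply/(sortedP 0) => i; rewrite size_map size_iota => lt_i1_u.
  rewrite !sigma_nth ?(ltnW lt_i1_u) // (take_nth false lt_i1_u) Mword_rcons.
  have /mxOverP := prefix_ge0 i.+1; rewrite -mulmxA MletterE.
  set y := M (take i.+1 u) *m _ => y_ge0.
  have := letter_ge0 (nth false u i.+1); have := y_ge0 0 0; have := y_ge0 1 0.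
  rewrite !nnegrE !(mulmx2E, mxE) /=; nra.
apply/(all_nthP 0) => i; rewrite size_map size_iota => lt_i_u.
by rewrite sigma_nth //; have /mxOverP := prefix_ge0 i.+1; apply.
Qed.

Lemma phiw_Mword s (y : 'cV[R]_2) : y \is a nonneg -> 0 < y 1 0 ->
  phiw a b s (y 0 0 / y 1 0) = (M s *m y) 0 0 / (M s *m y) 1 0.
Proof.
elim: s y => [|l s IH] y y_ge0 y1_gt0; first by rewrite mul1mx.
have y0_ge0 : 0 <= y 0 0 by rewrite -nnegrE; apply: (mxOverP y_ge0).
have philetterE : philetter a b l = phic (if l then b else a) by case: l.
have c_ge0 := letter_ge0 l; set c := if l then b else a in c_ge0 philetterE.
have Ly1_gt0 : 0 < c * y 0 0 + (1 + c) * y 1 0 by nra.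
rewrite Mword_cons -mulmxA -IH ?mxOverM ?MletterE -/c ?Mc_ge0 //; last first.
  by rewrite !(mulmx2E, mxE).
rewrite /= philetterE /phic !(mulmx2E, mxE) /=.
by congr phiw; field; rewrite !gt_eqF.
Qed.

Lemma phiw0_Mword s : phiw a b s 0 = M s 0 1 / M s 1 1.
Proof.
have := @phiw_Mword s (vec 0).
rewrite !(mulmx2E, mxE) /= mul0r !mulr0 !mulr1 !add0r; apply; first exact: vec_ge0.
exact: ltr01.
Qed.

End Positivity.

Section Block.
Variables (R : realFieldType) (a b : R) (w : word) (x : R).
Hypotheses (a_ge0 : 0 <= a) (lt_ab : a < b).
Hypotheses (pal_w : palindrome w) (phiw_le : phiw a b w 0 <= x).
Local Notation M := (Mword a b).
Local Notation W := (M w).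
Local Notation A := (M (true :: false :: w)).
Local Notation B := (M (false :: true :: w)).

Let b_ge0 : 0 <= b. Proof. exact: le_trans a_ge0 (ltW lt_ab). Qed.
Let W_ge0 := Mword_entry_ge0 a_ge0 b_ge0 w.
Let W_diag_ge1 := Mword_diag_ge1 a_ge0 b_ge0 w.

Let mxtrace_ge : W 1 1 + 1 <= \tr A.
Proof.
have [_ le11] := Mword_cons_diag_ge a_ge0 b_ge0 false w.
have := mxtrace_Mword_cons_ge a_ge0 b_ge0 true (false :: w); lra.
Qed.

Lemma Mword_phiw_le : W 0 1 <= x * W 1 1.
Proof.
have [_ W11_ge1] := W_diag_ge1.
by rewrite -ler_pdivrMr -?phiw0_Mword // (lt_le_trans ltr01).
Qed.

Lemma phiw_le_ge0 : 0 <= x.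
Proof.
have [_ W11_ge1] := W_diag_ge1; have := Mword_phiw_le; have := W_ge0 0 1.
nra.
Qed.

Lemma gap_base_ge0 (r s : 'rV[R]_2) g :
  (r *m vec x) 0 0 - (s *m vec x) 0 0 = (b - a) * g ->
  (r *m \adj A *m vec x) 0 0 - (s *m \adj B *m vec x) 0 0
    = (b - a) * (W 1 1 * x - W 0 1) ->
  W 1 1 * x - W 0 1 <= W 1 1 * g ->
  0 <= (r *m vec x) 0 0 - (s *m vec x) 0 0
    <= (r *m (A *m vec x)) 0 0 - (s *m (B *m vec x)) 0 0.
Proof.
move=> gap0 gap_adj bound.
rewrite !mulmx_trace_adj -(mxtrace_Mword_swap a b pal_w).
set t := \tr A; set y := W 1 1 * x - W 0 1 in gap_adj bound *.
set p := (r *m vec x) 0 0 in gap0 *; set q := (s *m vec x) 0 0 in gap0 *.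
set p' := (r *m \adj A *m vec x) 0 0 in gap_adj *.
set q' := (s *m \adj B *m vec x) 0 0 in gap_adj *.
have y_ge0 : 0 <= y by rewrite subr_ge0 mulrC Mword_phiw_le.
have [_ W11_ge1] := W_diag_ge1.
have g_ge0 : 0 <= g by nra.
have t_ge : W 1 1 + 1 <= t := mxtrace_ge.
have -> : t * p - p' - (t * q - q') = t * (p - q) - (p' - q') by ring.
rewrite gap0 gap_adj; have ba_ge0 : 0 <= b - a by rewrite subr_ge0 ltW.
have tg : W 1 1 * g <= (t - 1) * g by rewrite ler_wpM2r // lerBrDr.
rewrite mulr_ge0 //= -subr_ge0.
have -> : t * ((b - a) * g) - (b - a) * y - (b - a) * g
        = (b - a) * ((t - 1) * g - y) by ring.
by rewrite mulr_ge0 // subr_ge0 (le_trans bound).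
Qed.

Lemma prefix_gap_bound k (K := M (take k w)) :
  W 1 1 * x - W 0 1 <= W 1 1 * ((x + 1) * (K 0 0 + K 1 0) - (K 0 1 + K 1 1)).
Proof.
set D := M (drop k w).
have W_split : W = D *m K by rewrite -Mword_cat cat_take_drop.
have detK : K 0 0 * K 1 1 - K 0 1 * K 1 0 = 1 by rewrite -det_mx2 det_Mword.
have colsum_gap : (W 0 1 + W 1 1) * (K 0 0 + K 1 0) - (W 0 0 + W 1 0) * (K 0 1 + K 1 1)
    = (D 0 1 + D 1 1 - (D 0 0 + D 1 0)) * (K 0 0 * K 1 1 - K 0 1 * K 1 0).
  by rewrite W_split !mulmx2E; ring.
rewrite detK mulr1 in colsum_gap.
have key : W 1 1 * ((x + 1) * (K 0 0 + K 1 0) - (K 0 1 + K 1 1))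
    = (W 1 1 * x - W 0 1) * (K 0 0 + K 1 0) + (D 0 1 + D 1 1 - (D 0 0 + D 1 0)).
  by rewrite -colsum_gap -(palindrome_Mword a b pal_w); ring.
rewrite key; have := Mword_colsum_le a_ge0 b_ge0 (drop k w).
have [K00_ge1 _] := Mword_diag_ge1 a_ge0 b_ge0 (take k w).
have := Mword_entry_ge0 a_ge0 b_ge0 (take k w) 1 0.
have : 0 <= W 1 1 * x - W 0 1 by rewrite subr_ge0 mulrC Mword_phiw_le.
nra.
Qed.

Lemma sigma_partial_sum_le n j : (1 <= j <= size w + 2)%N ->
  \sum_(i < j) (sigma a b (false :: true :: w) n x)`_i
    <= \sum_(i < j) (sigma a b (true :: false :: w) n x)`_i.
Proof.
case/andP=> j_ge1 j_le; rewrite addn2 in j_le.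
rewrite !sum_sigma // -subr_ge0.
have tr_ge2 : 2 <= \tr A.
  by have [_ W11_ge1] := W_diag_ge1; have := mxtrace_ge; lra.
apply: (orbit_gap_ge0 (det_Mword _ _ _) (det_Mword _ _ _)
          (mxtrace_Mword_swap a b pal_w) tr_ge2).
case: j j_ge1 j_le => [|[|k]] // _ le_k_w /=.
  apply: (gap_base_ge0 (g := x + 1)).
  - by rewrite !Mword1; apply: gain_gap_letter.
  - by rewrite !Mword1 !Mword_cons2; apply: adj_gain_gap_letter.
  - by have := W_ge0 0 1; have := W_ge0 1 1; lra.
set K := M (take k w).
apply: (gap_base_ge0 (g := (x + 1) * (K 0 0 + K 1 0) - (K 0 1 + K 1 1))).
- by rewrite !Mword_cons2; apply: gain_gap_block.
- by rewrite !Mword_cons2; apply: adj_gain_gap_block.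
- exact: prefix_gap_bound.
Qed.

End Block.

Theorem proposition7 (R : realFieldType) (a b : R) (w : seq bool) (x : R) :
  0 <= a -> a < b -> palindrome w -> phiw a b w 0 <= x ->
  forall n : nat,
    let sx := sigma a b ([:: true; false] ++ w) n x in
    let sy := sigma a b ([:: false; true] ++ w) n x in
    [/\ sorted <=%R sx /\ all (fun t => 0 <= t) sx,
        sorted <=%R sy /\ all (fun t => 0 <= t) sy,
        wsupmaj sx sy &
        forall j : nat, (1 <= j <= size w + 2)%N ->
          \sum_(i < j) sy`_i <= \sum_(i < j) sx`_i].
Proof.
move=> a_ge0 lt_ab pal_w phiw_le n sx sy.
have b_ge0 : 0 <= b by apply: le_trans a_ge0 (ltW lt_ab).
have x_ge0 := phiw_le_ge0 a_ge0 lt_ab phiw_le.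
have sx_ok := sigma_sorted_ge0 a_ge0 b_ge0 ([:: true; false] ++ w) n x_ge0.
have sy_ok := sigma_sorted_ge0 a_ge0 b_ge0 ([:: false; true] ++ w) n x_ge0.
have partial_sums := sigma_partial_sum_le a_ge0 lt_ab pal_w phiw_le n.
split=> //; split; first by rewrite !size_map !size_iota.
case: sx_ok sy_ok => [sorted_x _] [sorted_y _] j.
rewrite !sorted_sort //; try exact: le_trans.
by rewrite size_map size_iota => j_range; apply: partial_sums; rewrite addn2.
Qed.
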